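(* Let $p\colon X\to B_1$ and $q\colon Y\to B_2$ be Boolean sets and $\varphi\colon X\to Y$ a morphism of Boolean sets. Then $\varphi(x\vee y)=\varphi(x)\vee\varphi(y)$ for all compatible $x,y\in X$.
   Context: Convention: a ''Boolean algebra'' means a generalized Boolean algebra (relatively complemented distributive lattice with $0$); morphisms of Boolean algebras preserve lattice operations, $0$ and relative complements. Presheaf of sets over a meet semilattice $E$: pairwise disjoint sets $X_e$, restriction maps $x\mapsto x|^e_f$, $X_e\to X_f$ for $e\ge f$, with $|^e_e=\mathrm{id}$ and $(x|^e_f)|^f_g=x|^e_g$; $p(x)=e$ iff $x\in X_e$; global support: all $X_e\ne\emptyset$. Order: $x\le y$ iff $p(x)\le p(y)$ and $x=y|^{p(y)}_{p(x)}$. Compatibility $x\sim y$: $x\wedge y$ exists and $p(x\wedge y)=p(x)\wedge p(y)$. A Boolean set is a presheaf $p\colon X\to B$ with global support over a Boolean algebra $B$ such that $(X,\le)$ has least element $0$, compatible pairs have joins, and $p(x)=0\Rightarrow x=0$. A morphism of Boolean sets is a map $\varphi\colon X\to Y$ with a morphism of Boolean algebras $\overline{\varphi}\colon B_1\to B_2$ such that $q\varphi=\overline{\varphi}p$ and $\varphi(x|^a_b)=\varphi(x)|^{\overline{\varphi}(a)}_{\overline{\varphi}(b)}$ for all $a\ge b$ and $x\in X_a$. *)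

From HB Require Import structures.
From mathcomp Require Import all_boot all_order.
Set Implicit Arguments. Unset Strict Implicit. Unset Printing Implicit Defensive.
Import Order.Theory.
Local Open Scope order_scope.

(* A generalized Boolean algebra = relatively (sectionally) complemented
   distributive lattice with 0: MathComp's cbDistrLatticeType
   (bottom \bot, meet `&`, join `|`, relative complement x `\` y). *)

Definition BA_morphism (d1 d2 : Order.disp_t)
  (B1 : cbDistrLatticeType d1) (B2 : cbDistrLatticeType d2) (f : B1 -> B2) : Prop :=
  [/\ forall a b, f (a `&` b) = f a `&` f b,
      forall a b, f (a `|` b) = f a `|` f b,
      f \bot = \bot &
      forall a b, f (a `\` b) = f a `\` f b].

(* Presheaf of sets over the meet semilattice B: the carrier X is the disjoint
   union of the fibres X_e = p^-1(e); res x f stands for x|^{p x}_f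
   (only meaningful when f <= p x). *)
Record presheaf (d : Order.disp_t) (B : cbDistrLatticeType d) (X : Type) := Presheaf {
  psh_p : X -> B;
  psh_res : X -> B -> X;
  psh_res_p : forall x f, f <= psh_p x -> psh_p (psh_res x f) = f;
  psh_res_id : forall x, psh_res x (psh_p x) = x;
  psh_res_comp : forall x f g, g <= f -> f <= psh_p x ->
      psh_res (psh_res x f) g = psh_res x g
}.

Section PresheafOrder.
Context (d : Order.disp_t) (B : cbDistrLatticeType d) (X : Type) (P : presheaf B X).

Definition ple (x y : X) : Prop :=
  psh_p P x <= psh_p P y /\ x = psh_res P y (psh_p P x).

Definition is_glb (m x y : X) : Prop :=
  ple m x /\ ple m y /\ forall z, ple z x -> ple z y -> ple z m.

Definition is_lub (j x y : X) : Prop :=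
  ple x j /\ ple y j /\ forall z, ple x z -> ple y z -> ple j z.

Definition is_least (z : X) : Prop := forall x, ple z x.

Definition compatible (x y : X) : Prop :=
  exists m, is_glb m x y /\ psh_p P m = psh_p P x `&` psh_p P y.

Definition global_support : Prop := forall e : B, exists x, psh_p P x = e.

Definition boolean_set : Prop :=
  [/\ global_support,
      exists z, is_least z,
      forall x y, compatible x y -> exists j, is_lub j x y &
      forall x, psh_p P x = \bot -> is_least x].

End PresheafOrder.

Definition BS_morphism (d1 d2 : Order.disp_t)
  (B1 : cbDistrLatticeType d1) (B2 : cbDistrLatticeType d2)
  (X Y : Type) (P : presheaf B1 X) (Q : presheaf B2 Y)
  (phi : X -> Y) (phibar : B1 -> B2) : Prop :=
  [/\ BA_morphism phibar,
      forall x, psh_p Q (phi x) = phibar (psh_p P x) &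
      forall x b, b <= psh_p P x ->
        phi (psh_res P x b) = psh_res Q (phi x) (phibar b)].

(* Restriction is functorial, so the image under phi of a join j of x and y is
   an upper bound of phi x and phi y; the two images are therefore compatible in
   Y and have a join J <= phi j. In a presheaf a join of x and y lives over
   p x \/ p y, and phibar preserves \/, so J and phi j lie over the same element;
   comparable elements over the same element coincide. *)
From mathcomp Require Import all_boot all_order.
Set Implicit Arguments.
Unset Strict Implicit.
Unset Printing Implicit Defensive.
Import Order.Theory.
Local Open Scope order_scope.

Section PresheafOrderTheory.
Context {d : Order.disp_t} {B : cbDistrLatticeType d} {X : Type} (P : presheaf B X).

Local Notation p := (psh_p P).
Local Notation res := (psh_res P).

Lemma ple_eq u v : ple P u v -> p u = p v -> u = v.
Proof. by move=> [_ eu] puv; rewrite eu puv psh_res_id. Qed.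

Lemma res_ple u v b : ple P u v -> b <= p u -> res u b = res v b.
Proof. by move=> [uv eu] bu; rewrite {1}eu psh_res_comp. Qed.

Lemma ple_trans u v w : ple P u v -> ple P v w -> ple P u w.
Proof.
move=> [uv eu] vw; split; first exact: le_trans uv vw.1.
by rewrite {1}eu (res_ple vw uv).
Qed.

Lemma ple_res_r u v b : ple P u v -> p u <= b -> b <= p v -> ple P u (res v b).
Proof.
move=> [_ eu] ub bv; split; first by rewrite psh_res_p.
by rewrite psh_res_comp.
Qed.

Lemma ple_res_l u v b : ple P u v -> b <= p u -> ple P (res v b) u.
Proof.
move=> uv bu; rewrite -(res_ple uv bu); split; first by rewrite psh_res_p.
by rewrite psh_res_p // psh_res_comp // psh_res_id.
Qed.

Lemma is_lub_p j x y : is_lub P j x y -> p j = p x `|` p y.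
Proof.
move=> [xj [yj lub_j]].
have pxy_j : p x `|` p y <= p j by rewrite leUx xj.1 yj.1.
have [r_j _] := lub_j _ (ple_res_r xj (leUl _ _) pxy_j)
                        (ple_res_r yj (leUr _ _) pxy_j).
by apply/le_anti; rewrite pxy_j -[X in _ <= X](psh_res_p pxy_j) r_j.
Qed.

Lemma compatible_ub x y u : ple P x u -> ple P y u -> compatible P x y.
Proof.
move=> xu yu; set m := p x `&` p y.
have mu : m <= p u := le_trans (leIl _ _) xu.1.
exists (res u m); split; last exact: psh_res_p.
split; [|split].
- exact: ple_res_l xu (leIl _ _).
- exact: ple_res_l yu (leIr _ _).
- move=> z zx zy; apply: ple_res_r (ple_trans zx xu) _ mu.
  by rewrite lexI zx.1 zy.1.
Qed.

End PresheafOrderTheory.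

Lemma BA_morphism_homo (d1 d2 : Order.disp_t)
  (B1 : cbDistrLatticeType d1) (B2 : cbDistrLatticeType d2) (f : B1 -> B2) :
  BA_morphism f -> {homo f : a b / a <= b}.
Proof. by move=> [_ fU _ _] a b /join_idPr ab; rewrite -ab fU leUl. Qed.

Lemma BS_morphism_ple (d1 d2 : Order.disp_t)
  (B1 : cbDistrLatticeType d1) (B2 : cbDistrLatticeType d2)
  (X Y : Type) (P : presheaf B1 X) (Q : presheaf B2 Y)
  (phi : X -> Y) (phibar : B1 -> B2) :
  BS_morphism P Q phi phibar ->
  forall u v, ple P u v -> ple Q (phi u) (phi v).
Proof.
move=> [hom hp hres] u v [uv eu]; split; first by rewrite !hp (BA_morphism_homo hom).
by rewrite {1}eu hres // hp.
Qed.

Theorem lemma1p8 (d1 d2 : Order.disp_t)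
  (B1 : cbDistrLatticeType d1) (B2 : cbDistrLatticeType d2)
  (X Y : Type) (P : presheaf B1 X) (Q : presheaf B2 Y)
  (phi : X -> Y) (phibar : B1 -> B2) :
  boolean_set P -> boolean_set Q -> BS_morphism P Q phi phibar ->
  forall x y j : X, compatible P x y -> is_lub P j x y ->
    is_lub Q (phi j) (phi x) (phi y).
Proof.
move=> _ [_ _ join_Q _] hphi x y j _ lub_j.
have [[_ hom_join _ _] hp _] := hphi.
have [xj [yj _]] := lub_j.
have phi_xj := BS_morphism_ple hphi xj.
have phi_yj := BS_morphism_ple hphi yj.
have [J lub_J] := join_Q _ _ (compatible_ub phi_xj phi_yj).
suff <- : J = phi j by [].
have [_ [_ least_J]] := lub_J.
apply: ple_eq (least_J _ phi_xj phi_yj) _.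
by rewrite (is_lub_p lub_J) !hp (is_lub_p lub_j) hom_join.
Qed.
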